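(* Let $b,n\ge1$ and $1\le c\le b$ be integers and let $p_1,\dots,p_b\ge 0$ satisfy $p_1=\dots=p_c>p_{c+1}\ge\dots\ge p_b$. If $0\le k\le n(b-1)$ is such that $|\mathrm{LDS}_{\le k}|\le c^n$, then $\Pr(\mathrm{DBS}(c))\ge\Pr(\mathrm{LDS}_{\le k})$.
   Context: Search-tree model: a complete $b$-ary tree of depth $n$ whose leaves are identified with sequences $(j_1,\dots,j_n)\in\{1,\dots,b\}^n$. Given reals $p_1,\dots,p_b\ge0$, the success probability of a leaf is $\prod_{i=1}^n p_{j_i}$, and for a set $S$ of leaves, $\Pr(S)=\sum_{(j_1,\dots,j_n)\in S}\prod_{i=1}^n p_{j_i}$; $|S|$ is the number of leaves in $S$. For $1\le c\le b$, $\mathrm{DBS}(c)=\{1,\dots,c\}^n$. The discrepancy of a leaf $(j_1,\dots,j_n)$ is $\sum_{i=1}^n (j_i-1)$, and $\mathrm{LDS}_{\le k}$ is the set of leaves of discrepancy at most $k$. *)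

From mathcomp Require Import all_boot all_order all_algebra.
From mathcomp Require Import reals.
Set Implicit Arguments. Unset Strict Implicit. Unset Printing Implicit Defensive.
Import Order.TTheory GRing.Theory Num.Theory.
Local Open Scope ring_scope.

(* Leaves of the complete b-ary tree of depth n: sequences (j_1..j_n).
   Convention: branch index j : 'I_b (0-based) stands for the paper's j+1,
   so p j is the paper's p_{j+1}, and the paper's (j_i - 1) is val j. *)
Definition leaf (b n : nat) := {ffun 'I_n -> 'I_b}.

Definition leaf_prob (R : realType) (b n : nat) (p : 'I_b -> R) (l : leaf b n) : R :=
  \prod_(i < n) p (l i).

Definition Pr (R : realType) (b n : nat) (p : 'I_b -> R) (S : {set leaf b n}) : R :=
  \sum_(l in S) leaf_prob p l.

Definition DBS (b n c : nat) : {set leaf b n} := [set l : leaf b n | [forall i, (l i < c)%N]].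

Definition discrepancy (b n : nat) (l : leaf b n) : nat := (\sum_(i < n) val (l i))%N.

Definition LDS_le (b n k : nat) : {set leaf b n} :=
  [set l : leaf b n | (discrepancy l <= k)%N].

From mathcomp Require Import all_boot all_order all_algebra.
From mathcomp Require Import reals.
Set Implicit Arguments. Unset Strict Implicit. Unset Printing Implicit Defensive.
Import Order.TTheory GRing.Theory Num.Theory.
Local Open Scope ring_scope.

(* Proof idea: every leaf has success probability at most p_1^n, since p_1 is
   the largest branch probability, while every leaf of DBS(c) has probability
   exactly p_1^n.  DBS(c) has c^n leaves, so a set of at most c^n leaves
   cannot be more probable than DBS(c). *)

Lemma card_DBS (b n c : nat) : (c <= b)%N -> #|DBS b n c| = (c ^ n)%N.
Proof.
move=> le_cb.
pose widen (g : {ffun 'I_n -> 'I_c}) : leaf b n := [ffun i => widen_ord le_cb (g i)].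
have widen_inj : injective widen.
  move=> g1 g2 /ffunP eq_g; apply/ffunP => i.
  by apply: val_inj; have := congr1 val (eq_g i); rewrite !ffunE.
have -> : DBS b n c = widen @: [set: {ffun 'I_n -> 'I_c}].
  apply/setP => l; rewrite inE; apply/forallP/imsetP => [lt_lc | [g _ ->] i].
    exists [ffun i => Ordinal (lt_lc i)]; first by rewrite inE.
    by apply/ffunP => i; apply: val_inj; rewrite !ffunE.
  by rewrite ffunE /=.
by rewrite card_imset // cardsT card_ffun !card_ord.
Qed.

Section LeafProbabilities.

Variables (R : realType) (b n : nat) (p : 'I_b -> R).

Lemma leaf_prob_le_exp (q : R) (l : leaf b n) :
  (forall j, 0 <= p j <= q) -> leaf_prob p l <= q ^+ n.
Proof.
move=> p_bounded; rewrite /leaf_prob -[n in q ^+ n]card_ord -prodr_const.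
exact: ler_prod.
Qed.

Lemma leaf_prob_const (q : R) (l : leaf b n) :
  (forall i, p (l i) = q) -> leaf_prob p l = q ^+ n.
Proof.
move=> p_l; rewrite /leaf_prob -[n in q ^+ n]card_ord -prodr_const.
exact: eq_bigr.
Qed.

Lemma Pr_le_card_mul (m : R) (S : {set leaf b n}) :
  (forall l, l \in S -> leaf_prob p l <= m) -> Pr p S <= #|S|%:R * m.
Proof. by move=> le_m; rewrite /Pr mulr_natl -sumr_const ler_sum. Qed.

Lemma Pr_card_mul (m : R) (S : {set leaf b n}) :
  (forall l, l \in S -> leaf_prob p l = m) -> Pr p S = #|S|%:R * m.
Proof. by move=> eq_m; rewrite /Pr mulr_natl -sumr_const; apply: eq_bigr. Qed.

End LeafProbabilities.

Theorem mainTheorem3 (R : realType) (b n c k : nat) (p : 'I_b -> R) :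
  (1 <= b)%N -> (1 <= n)%N -> (1 <= c)%N -> (c <= b)%N ->
  (forall j, 0 <= p j) ->
  (* p_1 = ... = p_c *)
  (forall i j : 'I_b, (i < c)%N -> (j < c)%N -> p i = p j) ->
  (* p_c > p_{c+1} (when c < b) *)
  (forall i j : 'I_b, (i < c)%N -> (c <= j)%N -> p j < p i) ->
  (* p_{c+1} >= ... >= p_b *)
  (forall i j : 'I_b, (c <= i)%N -> (i <= j)%N -> p j <= p i) ->
  (k <= n * (b - 1))%N ->
  (#|LDS_le b n k| <= c ^ n)%N ->
  Pr p (LDS_le b n k) <= Pr p (DBS b n c).
Proof.
move=> lt0b _ lt0c le_cb p_ge0 p_eq p_lt _ _ card_LDS.
pose i0 : 'I_b := Ordinal lt0b.
pose q := p i0.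
have p_le_q j : 0 <= p j <= q.
  rewrite p_ge0 /=; case: (ltnP j c) => [lt_jc | le_cj].
    by rewrite /q (p_eq j i0 lt_jc lt0c).
  exact/ltW/p_lt.
have Pr_DBS : Pr p (DBS b n c) = (c ^ n)%:R * q ^+ n.
  rewrite -(card_DBS n le_cb); apply: Pr_card_mul => l.
  rewrite inE => /forallP lt_lc; apply: leaf_prob_const => i.
  exact: p_eq.
rewrite Pr_DBS (le_trans (Pr_le_card_mul (fun l _ => leaf_prob_le_exp l p_le_q))) //.
have q_ge0 : 0 <= q := p_ge0 i0.
by rewrite ler_wpM2r ?exprn_ge0 ?ler_nat.
Qed.
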